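(* Let $(X,\pi)$ be a symmetric two-player game with relative payoff function $\Delta$. If $X$ is compact and $\Delta$ is upper semicontinuous and additively separable, then imitation is essentially unbeatable.
   Context: A symmetric two-player game $(X,\pi)$: common action set $X$ (here a topological space) and bounded payoff $\pi:X\times X\to\mathbb{R}$, $\pi(x,y)$ = payoff of the player choosing $x$ against $y$. Relative payoff: $\Delta(x,y)=\pi(x,y)-\pi(y,x)$; it is additively separable if $\Delta(x,y)=f(x)+g(y)$ for some functions $f,g:X\to\mathbb{R}$. Let $\hat\Delta:=\max_{x,y\in X}\Delta(x,y)$. Imitate-the-best: given initial $y_0\in X$ and any opponent sequence $(x_t)_{t\ge0}$ in $X$, $y_t=x_{t-1}$ if $\Delta(x_{t-1},y_{t-1})>0$ and $y_t=y_{t-1}$ otherwise. Imitation is essentially unbeatable if for every $y_0\in X$ and every sequence $(x_t)$, $\limsup_{T\to\infty}\sum_{t=0}^T\Delta(x_t,y_t)\le\hat\Delta$. *)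

From HB Require Import structures.
From mathcomp Require Import all_boot all_order all_algebra.
From mathcomp Require Import all_classical all_reals all_analysis.
Set Implicit Arguments. Unset Strict Implicit. Unset Printing Implicit Defensive.
Import Order.TTheory GRing.Theory Num.Theory.
Local Open Scope ring_scope.

Definition rel_payoff {X : Type} {R : realType} (pi : X -> X -> R) (x y : X) : R :=
  pi x y - pi y x.

Definition bounded_payoff {X : Type} {R : realType} (pi : X -> X -> R) : Prop :=
  exists M : R, forall x y, `|pi x y| <= M.

Definition upper_semicontinuous_fun {T : topologicalType} {R : realType}
  (h : T -> R) : Prop :=
  forall (p : T) (a : R), h p < a -> exists2 V, nbhs p V & forall q, V q -> h q < a.

Definition additively_separable {X : Type} {R : realType} (D : X -> X -> R) : Prop :=
  exists f g : X -> R, forall x y, D x y = f x + g y.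

(* hat Delta := max_{x,y} Delta(x,y) (taken as the supremum, which is attained
   under the hypotheses of the theorem). *)
Definition Delta_hat {X : Type} {R : realType} (D : X -> X -> R) : R :=
  sup (range (fun p : X * X => D p.1 p.2)).

Fixpoint imitate {X : Type} {R : realType} (D : X -> X -> R) (y0 : X)
  (xs : nat -> X) (t : nat) : X :=
  match t with
  | 0 => y0
  | t'.+1 => let y := imitate D y0 xs t' in
             if 0 < D (xs t') y then xs t' else y
  end.

Definition essentially_unbeatable {X : Type} {R : realType} (D : X -> X -> R) : Prop :=
  forall (y0 : X) (xs : nat -> X),
    (limn_esup (fun T : nat =>
        ((\sum_(0 <= t < T.+1) D (xs t) (imitate D y0 xs t))%:E)) <= (Delta_hat D)%:E)%E.

(* A separable relative payoff vanishes on the diagonal, so it is a potential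
   difference: Delta(x, y) = f x - f y.  Along the imitation dynamics each round
   contributes at most f(y_{t+1}) - f(y_t): either the opponent's move is copied
   (equality) or Delta(x_t, y_t) <= 0.  The cumulative relative payoff therefore
   telescopes to at most f(y_{T+1}) - f(y_0) = Delta(y_{T+1}, y_0) <= hat Delta. *)

From HB Require Import structures.
From mathcomp Require Import all_boot all_order all_algebra.
From mathcomp Require Import all_classical all_reals all_analysis.
Import Order.TTheory GRing.Theory Num.Theory.
Local Open Scope ring_scope.

Lemma limn_esup_le (R : realType) (u : (\bar R)^nat) (l : \bar R) :
  (forall n, u n <= l)%E -> (limn_esup u <= l)%E.
Proof.
move=> ul; rewrite limn_esup_lim; apply: lime_le; first exact: is_cvg_esups.
near=> m; apply: ge_ereal_sup => _ [n _ <-]; exact: ul.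
Unshelve. all: by end_near. Qed.

Lemma rel_payoff_diag {X : Type} {R : realType} (pi : X -> X -> R) (y : X) :
  rel_payoff pi y y = 0.
Proof. exact: subrr. Qed.

Lemma separable_potential {X : Type} {R : realType} (D : X -> X -> R) :
  (forall y, D y y = 0) -> additively_separable D ->
  exists f : X -> R, forall x y, D x y = f x - f y.
Proof.
move=> D0 [f [g Dfg]]; exists f => x y.
have gE : g y = - f y by apply/eqP; rewrite -addr_eq0 addrC -Dfg D0.
by rewrite Dfg gE.
Qed.

Lemma rel_payoff_le_Delta_hat {X : Type} {R : realType} (pi : X -> X -> R) :
  bounded_payoff pi -> forall x y, rel_payoff pi x y <= Delta_hat (rel_payoff pi).
Proof.
move=> [M piM] x y; apply: ub_le_sup; last by exists (x, y).
exists (M + M) => _ [p _ <-].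
rewrite (le_trans (ler_norm _)) // (le_trans (ler_normB _ _)) //.
exact: lerD.
Qed.

Section ImitationPotential.
Context {X : Type} {R : realType} {D : X -> X -> R} {f : X -> R}.
Hypothesis Df : forall x y, D x y = f x - f y.
Variables (y0 : X) (xs : nat -> X).

Let y := imitate D y0 xs.

Lemma imitate_step t : D (xs t) (y t) <= f (y t.+1) - f (y t).
Proof.
rewrite /y /=; case: ifP => [_|]; first by rewrite Df.
by rewrite subrr => /negbT; rewrite -leNgt.
Qed.

Lemma sum_imitate_le T : \sum_(0 <= t < T) D (xs t) (y t) <= f (y T) - f y0.
Proof.
rewrite -(telescope_sumr (f \o y) (leq0n T)); apply: ler_sum => t _.
exact: imitate_step.
Qed.

End ImitationPotential.

Theorem proposition3 (R : realType) (X : topologicalType) (pi : X -> X -> R) :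
  bounded_payoff pi ->
  compact [set: X] ->
  upper_semicontinuous_fun (fun p : X * X => rel_payoff pi p.1 p.2) ->
  additively_separable (rel_payoff pi) ->
  essentially_unbeatable (rel_payoff pi).
Proof.
(* Compactness and upper semicontinuity only serve to attain the maximum
   hat Delta; as [Delta_hat] is a supremum, boundedness suffices. *)
move=> pi_bounded _ _ /(separable_potential _ (rel_payoff_diag pi)) [f Df] y0 xs.
apply: limn_esup_le => T; rewrite lee_fin.
apply: (le_trans (sum_imitate_le Df y0 xs T.+1)).
by rewrite -Df; apply: rel_payoff_le_Delta_hat.
Qed.
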